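(* Let $y\in\mathbb{R}^n$, $\lambda\ge0$, $i\in[n]$ and let $J=[j_1:j_2]\subseteq[n]$ be an interval with $i\in J$. For $a,b\in\mathbb{R}$ let $$L^{J,a,b}(\theta_J)=\frac12\sum_{j=j_1}^{j_2}(y_j-\theta_j)^2+\lambda\Big(\sum_{j=j_1}^{j_2-1}|\theta_{j+1}-\theta_j|+|\theta_{j_1}-a|+|\theta_{j_2}-b|\Big),\qquad \theta_J=(\theta_{j_1},\dots,\theta_{j_2})\in\mathbb{R}^{|J|},$$ and let $\hat\theta^{J,a,b}$ be its minimizer, with $\hat\theta^{J,a,b}_i$ its entry indexed by $i$. Then $$\sup_{a,b\in\mathbb{R}}\hat\theta^{J,a,b}_i\le\max_{I\subseteq J \text{ interval},\ i\in I}\Big(\overline{y}_I-2\lambda\frac{C_{I,J}}{|I|}\Big).$$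
   Context: An interval is $[a:b]=\{a,\dots,b\}\subseteq[n]$. $\overline{y}_I$ is the average of $y_j$, $j\in I$. For intervals $I\subseteq J=[j_1:j_2]$: $C_{I,J}=1$ if $I$ contains neither $j_1$ nor $j_2$; $C_{I,J}=-1$ if $I=J$; $C_{I,J}=0$ otherwise. *)

(* Indices are natural numbers 1..n; vectors in R^n are
   represented as functions nat -> R (only entries 1..n are ever used). *)
From mathcomp Require Import all_boot all_order all_algebra.
Set Implicit Arguments. Unset Strict Implicit. Unset Printing Implicit Defensive.
Import Order.TTheory GRing.Theory Num.Theory.
Local Open Scope ring_scope.

Definition avg (R : realFieldType) (y : nat -> R) (k1 k2 : nat) : R :=
  (\sum_(k1 <= j < k2.+1) y j) / (k2.+1 - k1)%:R.

Definition CIJ (R : realFieldType) (k1 k2 j1 j2 : nat) : R :=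
  if (k1 == j1) && (k2 == j2) then -1
  else if (j1 < k1)%N && (k2 < j2)%N then 1 else 0.

Definition LJ (R : realFieldType) (y : nat -> R) (lam : R) (j1 j2 : nat)
  (a b : R) (theta : nat -> R) : R :=
  2^-1 * (\sum_(j1 <= j < j2.+1) (y j - theta j) ^+ 2)
  + lam * ((\sum_(j1 <= j < j2) `|theta j.+1 - theta j|)
           + `|theta j1 - a| + `|theta j2 - b|).

Definition is_minimizer (R : realFieldType) (y : nat -> R) (lam : R)
  (j1 j2 : nat) (a b : R) (theta : nat -> R) : Prop :=
  forall phi : nat -> R, LJ y lam j1 j2 a b theta <= LJ y lam j1 j2 a b phi.

Definition Ival (R : realFieldType) (y : nat -> R) (lam : R)
  (j1 j2 k1 k2 : nat) : R :=
  avg y k1 k2 - 2 * lam * CIJ R k1 k2 j1 j2 / (k2.+1 - k1)%:R.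

(* The default element of the big max is the value for I = [i:i], which is
   itself a member of the family, so this is exactly the maximum. *)
Definition maxI (R : realFieldType) (y : nat -> R) (lam : R)
  (j1 j2 i : nat) : R :=
  \big[Num.max/Ival y lam j1 j2 i i]_(k1 <- iota j1 (i.+1 - j1))
    \big[Num.max/Ival y lam j1 j2 i i]_(k2 <- iota i (j2.+1 - i))
      Ival y lam j1 j2 k1 k2.

From mathcomp Require Import all_boot all_order all_algebra.
From mathcomp Require Import zify ring lra.

Set Implicit Arguments.
Unset Strict Implicit.
Unset Printing Implicit Defensive.
Import Order.TTheory GRing.Theory Num.Theory.
Local Open Scope ring_scope.

(* Let t = theta_i and let I = [k1:k2] be the maximal interval around i on
   which theta >= t.  Lowering theta by a small e > 0 on I changes the fit by
   e * sum_I (y - theta) + O(e^2), removes e from each of the (at most two)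
   jumps between I and its neighbours in J, and adds at most e for each end
   of I that is an end of J; in total the penalty changes by at most
   -2 e C_{I,J}.  As theta is a minimizer, the first-order term must be
   nonnegative, i.e. sum_I theta <= sum_I y - 2 lam C_{I,J}, and
   t <= mean_I theta gives t <= avg_I y - 2 lam C_{I,J} / |I|. *)

Lemma big_nat_subrange (T : Type) (idx : T) (op : Monoid.law idx)
    (j1 j2 k1 k2 : nat) (F : nat -> T) :
  (j1 <= k1)%N -> (k2 <= j2)%N ->
  \big[op/idx]_(j1 <= j < j2 | (k1 <= j < k2)%N) F j
  = \big[op/idx]_(k1 <= j < k2) F j.
Proof.
move=> j1k1 k2j2.
rewrite (big_nat_widen _ _ _ _ _ k2j2) (big_nat_widenl _ _ _ _ _ j1k1).
by apply: eq_bigl => j; rewrite andbC.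
Qed.

Lemma maximal_run_left (P : pred nat) (j1 i : nat) :
  (j1 <= i)%N -> P i ->
  exists k1, [/\ (j1 <= k1 <= i)%N, (forall j, (k1 <= j <= i)%N -> P j)
               & (j1 < k1)%N -> ~~ P k1.-1].
Proof.
move=> j1i Pi.
pose Q k := (j1 <= k <= i)%N && all P (index_iota k i.+1).
have exQ : exists k, Q k.
  by exists i; rewrite /Q leqnn j1i /index_iota subSnn /= Pi.
case: (ex_minnP exQ) => k1 /andP[k1_range run] k1_min.
exists k1; split=> // [j j_range|j1k1].
  by apply: (allP run); rewrite mem_index_iota.
apply/negP=> Pk; have /k1_min : Q k1.-1.
  rewrite /Q /index_iota (_ : i.+1 - k1.-1 = (i.+1 - k1).+1)%N; last by lia.
  rewrite /= prednK ?Pk; [rewrite run; lia|lia].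
lia.
Qed.

Lemma maximal_run_right (P : pred nat) (i j2 : nat) :
  (i <= j2)%N -> P i ->
  exists k2, [/\ (i <= k2 <= j2)%N, (forall j, (i <= j <= k2)%N -> P j)
               & (k2 < j2)%N -> ~~ P k2.+1].
Proof.
move=> ij2 Pi.
pose Q k := (i <= k <= j2)%N && all P (index_iota i k.+1).
have exQ : exists k, Q k.
  by exists i; rewrite /Q leqnn ij2 /index_iota subSnn /= Pi.
have Q_le : forall k, Q k -> (k <= j2)%N by move=> k /andP[/andP[]].
case: (ex_maxnP exQ Q_le) => k2 /andP[k2_range run] k2_max.
exists k2; split=> // [j j_range|k2j2].
  by apply: (allP run); rewrite mem_index_iota.
apply/negP=> Pk; have /k2_max : Q k2.+1.
  rewrite /Q /index_iota (_ : k2.+2 - i = (k2.+1 - i) + 1)%N; last by lia.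
  rewrite iotaD all_cat -/(index_iota i k2.+1) run subnKC /=; last by lia.
  by rewrite Pk; lia.
lia.
Qed.

Definition lower_on (R : realFieldType) (k1 k2 : nat) (e : R) (theta : nat -> R)
    (j : nat) : R :=
  if (k1 <= j <= k2)%N then theta j - e else theta j.

Section LowerOn.

Variables (R : realFieldType) (y theta : nat -> R) (t e : R).
Variables (j1 j2 k1 k2 : nat).
Hypotheses (j1k1 : (j1 <= k1)%N) (k1k2 : (k1 <= k2)%N) (k2j2 : (k2 <= j2)%N).
Hypothesis e_ge0 : 0 <= e.
Hypothesis theta_ge : forall j, (k1 <= j <= k2)%N -> t <= theta j.
Hypothesis gap_left : (j1 < k1)%N -> e <= t - theta k1.-1.
Hypothesis gap_right : (k2 < j2)%N -> e <= t - theta k2.+1.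

Local Notation phi := (lower_on k1 k2 e theta).

Lemma sqdist_lower_on :
  \sum_(j1 <= j < j2.+1) (y j - phi j) ^+ 2
  = \sum_(j1 <= j < j2.+1) (y j - theta j) ^+ 2
    + 2 * e * \sum_(k1 <= j < k2.+1) (y j - theta j) + e ^+ 2 * (k2.+1 - k1)%:R.
Proof.
have -> : \sum_(j1 <= j < j2.+1) (y j - phi j) ^+ 2
    = \sum_(j1 <= j < j2.+1) ((y j - theta j) ^+ 2
        + (if (k1 <= j < k2.+1)%N then 2 * e * (y j - theta j) + e ^+ 2 else 0)).
  by apply: eq_bigr => j _; rewrite /lower_on ltnS; case: ifP => _; ring.
rewrite big_split /= -big_mkcond big_nat_subrange // big_split /=.
by rewrite -mulr_sumr sumr_const_nat mulr_natr addrA.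
Qed.

Lemma norm_lower_on_le (x : nat) (a : R) :
  `|phi x - a| <= `|theta x - a| + (if (k1 <= x <= k2)%N then e else 0).
Proof.
rewrite /lower_on; case: ifP => _; last by rewrite addr0.
by rewrite addrAC (le_trans (ler_normB _ _)) // (ger0_norm e_ge0).
Qed.

Lemma norm_jump_lower_on (j : nat) : (j1 <= j < j2)%N ->
  `|phi j.+1 - phi j| <= `|theta j.+1 - theta j|
    - (if (j1 < k1)%N && (j == k1.-1) then e else 0)
    - (if (k2 < j2)%N && (j == k2) then e else 0).
Proof.
move=> j_range; rewrite /lower_on.
have [left_end|not_left_end] := boolP ((j1 < k1)%N && (j == k1.-1)).
  have -> : (k2 < j2)%N && (j == k2) = false by lia.
  have -> : (k1 <= j.+1 <= k2)%N = true by lia.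
  have -> : (k1 <= j <= k2)%N = false by lia.
  have above : t <= theta j.+1 by apply: theta_ge; lia.
  have below : e <= t - theta j by case/andP: left_end => /gap_left ? /eqP ->.
  (* lra ignores section hypotheses, so e_ge0 is passed explicitly *)
  by rewrite /= !ger0_norm; move: e_ge0; lra.
have [right_end|not_right_end] := boolP ((k2 < j2)%N && (j == k2)).
  have -> : (k1 <= j.+1 <= k2)%N = false by lia.
  have -> : (k1 <= j <= k2)%N = true by lia.
  have above : t <= theta j by apply: theta_ge; lia.
  have below : e <= t - theta j.+1.
    by case/andP: right_end => /gap_right ? /eqP ->.
  by rewrite /= !ler0_norm; move: e_ge0; lra.
have -> : (k1 <= j.+1 <= k2)%N = (k1 <= j <= k2)%N by lia.
by case: ifP => _; rewrite !subr0 // opprB addrA subrK addrC.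
Qed.

Lemma tv_lower_on :
  \sum_(j1 <= j < j2) `|phi j.+1 - phi j|
  <= \sum_(j1 <= j < j2) `|theta j.+1 - theta j|
     - (if (j1 < k1)%N then e else 0) - (if (k2 < j2)%N then e else 0).
Proof.
have -> : (if (j1 < k1)%N then e else 0)
    = \sum_(j1 <= j < j2) (if (j1 < k1)%N && (j == k1.-1) then e else 0).
  by rewrite -big_mkcond big_nat1_cond_eq; congr (if _ then _ else _); lia.
have -> : (if (k2 < j2)%N then e else 0)
    = \sum_(j1 <= j < j2) (if (k2 < j2)%N && (j == k2) then e else 0).
  by rewrite -big_mkcond big_nat1_cond_eq; congr (if _ then _ else _); lia.
by rewrite -!sumrB; apply: ler_sum_nat => j; apply: norm_jump_lower_on.
Qed.

Lemma penalty_lower_on (a b : R) :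
  \sum_(j1 <= j < j2) `|phi j.+1 - phi j| + `|phi j1 - a| + `|phi j2 - b|
  <= \sum_(j1 <= j < j2) `|theta j.+1 - theta j| + `|theta j1 - a| + `|theta j2 - b|
     - 2 * e * CIJ R k1 k2 j1 j2.
Proof.
have := tv_lower_on.
have := norm_lower_on_le j1 a; have := norm_lower_on_le j2 b.
rewrite /CIJ (_ : (k1 <= j1 <= k2)%N = (k1 == j1)); last by lia.
rewrite (_ : (k1 <= j2 <= k2)%N = (k2 == j2)); last by lia.
rewrite (_ : (j1 < k1)%N = (k1 != j1)); last by lia.
rewrite (_ : (k2 < j2)%N = (k2 != j2)); last by lia.
by case: (k1 == j1); case: (k2 == j2) => /=; lra.
Qed.

Lemma LJ_lower_on (lam a b : R) : 0 <= lam ->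
  LJ y lam j1 j2 a b phi
  <= LJ y lam j1 j2 a b theta
     + e * (\sum_(k1 <= j < k2.+1) (y j - theta j) - 2 * lam * CIJ R k1 k2 j1 j2)
     + e ^+ 2 * (k2.+1 - k1)%:R / 2.
Proof.
move=> lam_ge0; rewrite /LJ sqdist_lower_on.
have := ler_wpM2l lam_ge0 (penalty_lower_on a b); lra.
Qed.

End LowerOn.

Lemma first_order_ge0 (R : realFieldType) (D M d : R) : 0 <= M -> 0 < d ->
  (forall e, 0 < e -> e <= d -> 0 <= e * D + e ^+ 2 * M) -> 0 <= D.
Proof.
move=> M_ge0 d_gt0 small; rewrite leNgt; apply/negP => D_lt0.
have M1_gt0 : 0 < M + 1 by lra.
pose e := Num.min d (- D / (M + 1)).
have e_gt0 : 0 < e by rewrite lt_min d_gt0 divr_gt0 // oppr_gt0.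
have eM : e * (M + 1) <= - D by rewrite -ler_pdivlMr // ge_min lexx orbT.
have e_le_d : e <= d by rewrite ge_min lexx.
have := small e e_gt0 e_le_d.
have := ler_wpM2l (ltW e_gt0) eM; have := mulr_gt0 e_gt0 e_gt0; lra.
Qed.

Lemma exists_pos_le_cond (R : realDomainType) (b1 b2 : bool) (u1 u2 : R) :
  (b1 -> 0 < u1) -> (b2 -> 0 < u2) ->
  exists2 d, 0 < d & (b1 -> d <= u1) /\ (b2 -> d <= u2).
Proof.
case: b1 b2 => [] [] u1_gt0 u2_gt0.
- exists (Num.min u1 u2); first by rewrite lt_min u1_gt0 ?u2_gt0.
  by split=> _; rewrite ge_min lexx ?orbT.
- by exists u1; [apply: u1_gt0|split].
- by exists u2; [apply: u2_gt0|split].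
- by exists 1.
Qed.

Lemma Ival_le_maxI (R : realFieldType) (y : nat -> R) (lam : R)
    (j1 j2 i k1 k2 : nat) :
  (j1 <= k1 <= i)%N -> (i <= k2 <= j2)%N ->
  Ival y lam j1 j2 k1 k2 <= maxI y lam j1 j2 i.
Proof.
move=> k1_range k2_range; rewrite /maxI.
apply: (bigmax_sup_seq _ k1) => //; first by rewrite mem_iota; lia.
by apply: (bigmax_sup_seq _ k2) => //; rewrite mem_iota; lia.
Qed.

Theorem lemma4 (R : realFieldType) (n : nat) (y : nat -> R) (lam : R)
  (i j1 j2 : nat) :
  0 <= lam -> (1 <= j1)%N -> (j1 <= i)%N -> (i <= j2)%N -> (j2 <= n)%N ->
  forall (a b : R) (theta : nat -> R),
    is_minimizer y lam j1 j2 a b theta ->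
    theta i <= maxI y lam j1 j2 i.
Proof.
move=> lam_ge0 _ j1i ij2 _ a b theta theta_min; set t := theta i.
have [k1 [/andP[j1k1 k1i] run_left end_left]] :=
  maximal_run_left (P := fun j => t <= theta j) j1i (lexx t).
have [k2 [/andP[ik2 k2j2] run_right end_right]] :=
  maximal_run_right (P := fun j => t <= theta j) ij2 (lexx t).
have theta_ge j : (k1 <= j <= k2)%N -> t <= theta j.
  move=> j_range; case: (leqP j i) => ji.
  - by apply: run_left; lia.
  - by apply: run_right; lia.
have gap_left : (j1 < k1)%N -> 0 < t - theta k1.-1.
  by move/end_left; rewrite subr_gt0 ltNge.
have gap_right : (k2 < j2)%N -> 0 < t - theta k2.+1.
  by move/end_right; rewrite subr_gt0 ltNge.
have [d d_gt0 [d_left d_right]] := exists_pos_le_cond gap_left gap_right.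
have m_gt0 : 0 < (k2.+1 - k1)%:R :> R by rewrite ltr0n; lia.
have slope :
    0 <= \sum_(k1 <= j < k2.+1) (y j - theta j) - 2 * lam * CIJ R k1 k2 j1 j2.
  apply: (@first_order_ge0 _ _ ((k2.+1 - k1)%:R / 2) d) => // [|e e_gt0 e_le_d].
    by rewrite divr_ge0 // ltW.
  have := theta_min (lower_on k1 k2 e theta).
  have := LJ_lower_on y j1k1 (leq_trans k1i ik2) k2j2 (ltW e_gt0) theta_ge
    (fun h => le_trans e_le_d (d_left h)) (fun h => le_trans e_le_d (d_right h))
    a b lam_ge0.
  lra.
have mean_ge : t * (k2.+1 - k1)%:R <= \sum_(k1 <= j < k2.+1) theta j.
  rewrite mulr_natr -sumr_const_nat; apply: ler_sum_nat => j j_range.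
  by apply: theta_ge; lia.
have k1_range : (j1 <= k1 <= i)%N by rewrite j1k1.
have k2_range : (i <= k2 <= j2)%N by rewrite ik2.
apply: le_trans (Ival_le_maxI y lam k1_range k2_range).
by rewrite /Ival /avg -mulrBl ler_pdivlMr //; move: slope; rewrite sumrB; lra.
Qed.
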